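(* For every $f\in\mathcal{R}$ there exists $g\in\mathcal{R}$ such that $g=(f,g)$.
   Context: $\mathcal{R}$ is the group of rational homeomorphisms of $\{0,1\}^\omega$: those $f$ for which there is a finite asynchronous binary transducer $(S,s_0,t,o)$ ($S$ finite, $t\colon S\times\{0,1\}\to S$, $o\colon S\times\{0,1\}\to\{0,1\}^*$) with $f(\psi)=o(s_0,\psi)$, where for $\sigma_1\sigma_2\cdots$ one sets $s_1=s_0$, $s_{n+1}=t(s_n,\sigma_n)$ and $o(s_0,\sigma_1\sigma_2\cdots)=o(s_1,\sigma_1)o(s_2,\sigma_2)\cdots$. For homeomorphisms $f,g$, $(f,g)$ denotes the homeomorphism with $(f,g)(0\zeta)=0f(\zeta)$ and $(f,g)(1\zeta)=1g(\zeta)$ for all $\zeta\in\{0,1\}^\omega$. *)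

From mathcomp Require Import all_boot.
Set Implicit Arguments. Unset Strict Implicit. Unset Printing Implicit Defensive.

(* Cantor space {0,1}^omega : infinite binary sequences, 0 ~ false, 1 ~ true. *)
Definition cantor := nat -> bool.

Definition agree (n : nat) (x y : cantor) : Prop := forall i, i < n -> x i = y i.

Definition cont (f : cantor -> cantor) : Prop :=
  forall x n, exists m, forall y, agree m x y -> agree n (f x) (f y).

Definition homeo (f : cantor -> cantor) : Prop :=
  exists g : cantor -> cantor,
    [/\ cancel f g, cancel g f, cont f & cont g].

(* states s_1 = s_0, s_{n+1} = t(s_n, sigma_n); here index i stands for s_{i+1},
   and psi i for sigma_{i+1}. *)
Fixpoint run (S : Type) (s0 : S) (t : S -> bool -> S) (psi : cantor) (n : nat) : S :=
  match n with 0 => s0 | n'.+1 => t (run s0 t psi n') (psi n') end.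

Definition out_prefix (S : Type) (s0 : S) (t : S -> bool -> S)
    (o : S -> bool -> seq bool) (psi : cantor) (n : nat) : seq bool :=
  flatten [seq o (run s0 t psi i) (psi i) | i <- iota 0 n].

(* f(psi) = o(s0, psi) : the infinite concatenation of the outputs is
   (infinite and) equal to f psi. *)
Definition computes (S : Type) (s0 : S) (t : S -> bool -> S)
    (o : S -> bool -> seq bool) (f : cantor -> cantor) : Prop :=
  forall psi,
    (forall n i, i < size (out_prefix s0 t o psi n) ->
        nth false (out_prefix s0 t o psi n) i = f psi i) /\
    (forall m, exists n, m <= size (out_prefix s0 t o psi n)).

Definition rational (f : cantor -> cantor) : Prop :=
  homeo f /\
  exists (S : finType) (s0 : S) (t : S -> bool -> S) (o : S -> bool -> seq bool),
    computes s0 t o f.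

Definition cons_c (b : bool) (x : cantor) : cantor :=
  fun n => match n with 0 => b | n'.+1 => x n' end.
Definition tail_c (x : cantor) : cantor := fun n => x n.+1.

Definition pairf (f g : cantor -> cantor) : cantor -> cantor :=
  fun psi => if psi 0 then cons_c true (g (tail_c psi))
             else cons_c false (f (tail_c psi)).

(* The solution g of g = (f, g) copies the leading block of 1s of its input
   and applies f after the first 0: g (1^k 0 x) = 1^k 0 f(x) and g (1^ω) = 1^ω.
   It inherits inverse and continuity from f, and a transducer for g is one
   for f with a fresh initial state that echoes 1s and jumps to the initial
   state of f on reading 0. *)
From Stdlib Require Import FunctionalExtensionality.
From mathcomp Require Import all_boot.

Set Implicit Arguments. Unset Strict Implicit. Unset Printing Implicit Defensive.

Lemma agreeS n x y :
  agree n.+1 x y <-> x 0 = y 0 /\ agree n (tail_c x) (tail_c y).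
Proof.
split=> [xy | [xy0 xy] [|i] lt_i_n] //.
by split=> [|i lt_i_n]; [exact: xy | exact: (xy i.+1)].
by apply: xy.
Qed.

Fixpoint pair_fix (f : cantor -> cantor) (x : cantor) (n : nat) : bool :=
  if n is n'.+1 then
    if x 0 then pair_fix f (tail_c x) n' else f (tail_c x) n'
  else x 0.

Section PairFix.

Variable f : cantor -> cantor.

Lemma tail_pair_fix x :
  tail_c (pair_fix f x) = if x 0 then pair_fix f (tail_c x) else f (tail_c x).
Proof. by apply: functional_extensionality => n; rewrite /tail_c /=; case: (x 0). Qed.

Lemma pair_fixE : pair_fix f = pairf f (pair_fix f).
Proof.
apply: functional_extensionality => x; apply: functional_extensionality => n.
by rewrite /pairf; case: n => [|n] /=; case: (x 0).
Qed.

Lemma pair_fixK f' : cancel f f' -> cancel (pair_fix f) (pair_fix f').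
Proof.
move=> fK x; apply: functional_extensionality => n.
elim: n x => [|n IHn] x //=.
by rewrite tail_pair_fix; case: (x 0) => /=; rewrite ?IHn ?fK.
Qed.

Lemma pair_fix_cont : cont f -> cont (pair_fix f).
Proof.
move=> f_cont x n; elim: n x => [|n IHn] x; first by exists 0 => y _ i.
have [m Hm] : exists m, forall y, agree m (tail_c x) y ->
    agree n (tail_c (pair_fix f x))
            (if x 0 then pair_fix f y else f y).
  by rewrite tail_pair_fix; case: (x 0); [exact: IHn | exact: f_cont].
exists m.+1 => y /agreeS [xy0 xy]; apply/agreeS; split=> //.
by rewrite [tail_c (pair_fix f y)]tail_pair_fix -xy0; exact: Hm.
Qed.

End PairFix.

Lemma homeo_pair_fix f : homeo f -> homeo (pair_fix f).
Proof.
case=> f' [fK f'K f_cont f'_cont]; exists (pair_fix f').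
by split; apply: pair_fixK || apply: pair_fix_cont.
Qed.

Section Transducer.

Variables (S : Type) (t : S -> bool -> S) (o : S -> bool -> seq bool).

Lemma runS s psi i : run s t psi i.+1 = run (t s (psi 0)) t (tail_c psi) i.
Proof. by elim: i => [|i IHi] //=; rewrite -IHi. Qed.

Lemma out_prefixS s psi n :
  out_prefix s t o psi n.+1 =
  o s (psi 0) ++ out_prefix (t s (psi 0)) t o (tail_c psi) n.
Proof.
rewrite /out_prefix /= (iotaDl 1 0) -map_comp.
by congr (_ ++ flatten _); apply: eq_map => i /=; rewrite add0n -runS.
Qed.

End Transducer.

Section EchoOnes.

Variables (S : Type) (s0 : S) (t : S -> bool -> S) (o : S -> bool -> seq bool).

Definition echo_ones_t (s : option S) (b : bool) : option S :=
  if s is Some s then Some (t s b) else if b then None else Some s0.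

Definition echo_ones_o (s : option S) (b : bool) : seq bool :=
  if s is Some s then o s b else [:: b].

Lemma run_echo_ones s psi n :
  run (Some s) echo_ones_t psi n = Some (run s t psi n).
Proof. by elim: n => [|n IHn] //=; rewrite IHn. Qed.

Lemma out_prefix_echo_ones s psi n :
  out_prefix (Some s) echo_ones_t echo_ones_o psi n = out_prefix s t o psi n.
Proof. by congr flatten; apply: eq_map => i; rewrite run_echo_ones. Qed.

Lemma computes_pair_fix f :
  computes s0 t o f -> computes None echo_ones_t echo_ones_o (pair_fix f).
Proof.
move=> f_comp psi; split.
- move=> n; elim: n psi => [|n IHn] psi i //.
  rewrite out_prefixS; case: i => [|i] //=.
  case: (psi 0) => /=; first exact: IHn.
  by rewrite out_prefix_echo_ones; exact: (f_comp (tail_c psi)).1.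
- move=> m; elim: m psi => [|m IHm] psi; first by exists 0.
  have [n Hn] : exists n, m <= size (out_prefix (echo_ones_t None (psi 0))
                          echo_ones_t echo_ones_o (tail_c psi) n).
    case: (psi 0) => /=; first exact: IHm.
    have [n Hn] := (f_comp (tail_c psi)).2 m.
    by exists n; rewrite out_prefix_echo_ones.
  by exists n.+1; rewrite out_prefixS size_cat /= addnC addn1.
Qed.

End EchoOnes.

Theorem lemma2p6 (f : cantor -> cantor) :
  rational f -> exists g : cantor -> cantor, rational g /\ g = pairf f g.
Proof.
case=> f_homeo [S [s0 [t [o f_comp]]]].
exists (pair_fix f); split; last exact: pair_fixE.
split; first exact: homeo_pair_fix.
by exists (option S : finType), None, (echo_ones_t s0 t), (echo_ones_o o);
  exact: computes_pair_fix.
Qed.
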